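(* Let $k$ be a field and let $Y,Z$ be objects of $\mathcal S_2(k)$ of the same partition type. (1) $Y\leq_{\rm hom}Z$ holds if and only if $[X,Y]\le[X,Z]$ for every object $X$ of $\mathcal S_2(k)$. (2) $Y\leq_{\rm hom}Z$ holds if and only if $[X,Y]\le[X,Z]$ for every finite-dimensional $\Lambda$-module $X$.
   Context: $\Lambda=\begin{pmatrix}k[T]&k[T]\\0&k[T]\end{pmatrix}$; finite-dimensional right $\Lambda$-modules are identified with triples $(X_1,X_2,h)$ of finite-dimensional $k[T]$-modules and a $k[T]$-map $h:X_1\to X_2$; morphisms $(X_1,X_2,h)\to(X'_1,X'_2,h')$ are pairs $(\psi_1,\psi_2)$ of $k[T]$-maps with $h'\psi_1=\psi_2h$. For a partition $\alpha$ let $N_\alpha=\bigoplus_ik[T]/(T^{\alpha_i})$. $\mathcal S(k)$ is the full subcategory of triples $(N_\alpha,N_\beta,f)$ with $f$ injective; $\mathcal S_2(k)$ the full subcategory of those with $\alpha_1\le2$. The partition type of $(N_\alpha,N_\beta,f)$ is $(\alpha,\beta,\gamma)$ where $\operatorname{Coker}f\cong N_\gamma$. $[X,Y]=\dim_k\operatorname{Hom}_\Lambda(X,Y)$. $Y\leq_{\rm hom}Z$ means $[X,Y]\le[X,Z]$ for every object $X$ of $\mathcal S(k)$. *)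

From HB Require Import structures.
From mathcomp Require Import all_boot all_order all_algebra.
Set Implicit Arguments. Unset Strict Implicit. Unset Printing Implicit Defensive.
Import GRing.Theory.
Local Open Scope ring_scope.

(* Conventions: a finite-dimensional k[T]-module is k^n (row vectors) with T
   acting by right multiplication by a matrix A : 'M_n.  A k[T]-map
   X -> X' is v |-> v *m P with A *m P = P *m A'. *)

Section Defs.
Variable k : fieldType.

Record triple := Triple {
  tr_d1 : nat; tr_d2 : nat;
  tr_A1 : 'M[k]_tr_d1;
  tr_A2 : 'M[k]_tr_d2;
  tr_h  : 'M[k]_(tr_d1, tr_d2)
}.

(* (X1,X2,h) is a (finite-dimensional right) Lambda-module: h is k[T]-linear *)
Definition is_Lmod (X : triple) : Prop := tr_A1 X *m tr_h X = tr_h X *m tr_A2 X.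

Definition hom_cond (X Y : triple)
  (p : 'M[k]_(tr_d1 X, tr_d1 Y) * 'M[k]_(tr_d2 X, tr_d2 Y)) :
  ('M[k]_(tr_d1 X, tr_d1 Y) * 'M[k]_(tr_d2 X, tr_d2 Y)) * 'M[k]_(tr_d1 X, tr_d2 Y) :=
  ((tr_A1 X *m p.1 - p.1 *m tr_A1 Y, tr_A2 X *m p.2 - p.2 *m tr_A2 Y),
   tr_h X *m p.2 - p.1 *m tr_h Y).

Definition Hom_space (X Y : triple) := lker (linfun (@hom_cond X Y)).

(* [X, Y] = dim_k Hom_Lambda(X, Y) *)
Definition homdim (X Y : triple) : nat := \dim (Hom_space X Y).

Definition is_partition (s : seq nat) : bool :=
  sorted geq s && all (fun x => 0 < x)%N s.

(* Nilpotent Jordan block: matrix of T on k[T]/(T^a) in basis 1,T,..,T^(a-1) *)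
Definition Jblock (a : nat) : 'M[k]_a := \matrix_(i, j) ((j == i.+1 :> nat)%:R).

(* N_alpha = (+)_i k[T]/(T^alpha_i) *)
Fixpoint Nmat (s : seq nat) : 'M[k]_(sumn s) :=
  match s return 'M[k]_(sumn s) with
  | [::] => 0
  | a :: s' => block_mx (Jblock a) 0 0 (Nmat s')
  end.

(* X is an object of S(k): X = (N_alpha, N_beta, f) with f injective *)
Definition in_S (X : triple) : Prop :=
  exists (a b : seq nat) (f : 'M[k]_(sumn a, sumn b)),
    [/\ is_partition a, is_partition b,
        X = Triple (Nmat a) (Nmat b) f,
        is_Lmod X & row_free f].

Definition in_S2 (X : triple) : Prop :=
  exists (a b : seq nat) (f : 'M[k]_(sumn a, sumn b)),
    [/\ is_partition a && is_partition b, (head 0 a <= 2)%N,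
        X = Triple (Nmat a) (Nmat b) f,
        is_Lmod X & row_free f].

(* X = (N_a, N_b, f) in S(k) has partition type (a, b, c): Coker f ~ N_c,
   i.e. there is a surjective k[T]-map g : N_b -> N_c whose kernel is Im f. *)
Definition has_ptype (X : triple) (a b c : seq nat) : Prop :=
  [/\ is_partition a, is_partition b, is_partition c &
   exists f : 'M[k]_(sumn a, sumn b),
     [/\ X = Triple (Nmat a) (Nmat b) f,
         is_Lmod X, row_free f &
         exists g : 'M[k]_(sumn b, sumn c),
           [/\ Nmat b *m g = g *m Nmat c, row_full g & (f == kermx g)%MS]]].

Definition hom_le (Y Z : triple) : Prop :=
  forall X, in_S X -> (homdim X Y <= homdim X Z)%N.

End Defs.

From HB Require Import structures.
From mathcomp Require Import all_boot all_order all_algebra zify.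
Set Implicit Arguments. Unset Strict Implicit. Unset Printing Implicit Defensive.
Import GRing.Theory.
Local Open Scope ring_scope.

(* A map from a Lambda-module X = (X1, X2, h) into an object Y of S_2(k) with
   Y2 T^N = 0 kills h(X1) T^2 + X2 T^N: Y1 T^2 = 0 and the structure map of Y
   is injective.  Hence [X, Y] = [X', Y], where X' consists of the quotient
   X2 / (h(X1) T^2 + X2 T^N) and the image of X1 in it, and by the Jordan normal
   form of nilpotent matrices X' is isomorphic to an object of S_2(k).  So
   testing against S_2(k), S(k) or all Lambda-modules gives the same relation. *)

Section HomSpace.
Variable k : fieldType.
Implicit Types X Y : triple k.

Lemma hom_cond_is_linear X Y : linear (@hom_cond k X Y).
Proof.
move=> a p q; rewrite /hom_cond /= !mulmxDr !mulmxDl -!scalemxAr -!scalemxAl.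
by congr (_, _, _); rewrite /= scalerBr opprD addrACA.
Qed.

HB.instance Definition _ X Y :=
  GRing.isLinear.Build k _ _ *:%R (@hom_cond k X Y) (@hom_cond_is_linear X Y).

Lemma Hom_spaceP X Y p :
  reflect [/\ tr_A1 X *m p.1 = p.1 *m tr_A1 Y, tr_A2 X *m p.2 = p.2 *m tr_A2 Y &
             tr_h X *m p.2 = p.1 *m tr_h Y] (p \in Hom_space X Y).
Proof.
rewrite /Hom_space memv_ker lfunE /hom_cond; apply: (iffP eqP).
  by case=> /subr0_eq ? /subr0_eq ? /subr0_eq ?.
by case=> e1 e2 e3; rewrite /= /hom_cond e1 e2 e3 !subrr.
Qed.

Lemma mem_Hom_space_free X Y p :
  is_Lmod X -> is_Lmod Y -> row_free (tr_h Y) ->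
  tr_A2 X *m p.2 = p.2 *m tr_A2 Y -> tr_h X *m p.2 = p.1 *m tr_h Y ->
  p \in Hom_space X Y.
Proof.
rewrite /is_Lmod => LX LY freeY A2p hp; apply/Hom_spaceP; split=> //.
apply: (row_free_inj freeY) => /=.
by rewrite -mulmxA -hp mulmxA LX -mulmxA A2p mulmxA hp -!mulmxA LY.
Qed.

Lemma Hom_space_comp (X X' Y : triple k) r p :
  r \in Hom_space X X' -> p \in Hom_space X' Y ->
  (r.1 *m p.1, r.2 *m p.2) \in Hom_space X Y.
Proof.
move=> /Hom_spaceP[r1 r2 rh] /Hom_spaceP[p1 p2 ph]; apply/Hom_spaceP => /=.
by rewrite !mulmxA r1 r2 rh -!mulmxA p1 p2 ph.
Qed.

Lemma Hom_space_eq0 X Y p : row_free (tr_h Y) ->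
  p \in Hom_space X Y -> p.2 = 0 -> p = 0.
Proof.
move=> freeY /Hom_spaceP[_ _ ph] p2_0; move: ph; rewrite p2_0 mulmx0 => /esym/eqP.
by rewrite mulmx_free_eq0 // => /eqP p1_0; rewrite [p]surjective_pairing p1_0 p2_0.
Qed.

Definition mulmx_pair m1 m2 n1 n2 p1 p2
    (L1 : 'M[k]_(p1, m1)) (L2 : 'M[k]_(p2, n1))
    (p : 'M[k]_(m1, m2) * 'M[k]_(n1, n2)) := (L1 *m p.1, L2 *m p.2).

Lemma mulmx_pair_is_linear m1 m2 n1 n2 p1 p2 L1 L2 :
  linear (@mulmx_pair m1 m2 n1 n2 p1 p2 L1 L2).
Proof. by move=> a p q; rewrite /mulmx_pair /= !mulmxDr -!scalemxAr. Qed.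

HB.instance Definition _ m1 m2 n1 n2 p1 p2 L1 L2 :=
  GRing.isLinear.Build k _ _ *:%R (@mulmx_pair m1 m2 n1 n2 p1 p2 L1 L2)
    (@mulmx_pair_is_linear m1 m2 n1 n2 p1 p2 L1 L2).

Lemma dimv_leq_inj (aT rT : vectType k) (f : {linear aT -> rT})
    (U : {vspace aT}) (V : {vspace rT}) :
  {in U, forall u, f u \in V} -> {in U, forall u, f u = 0 -> u = 0} ->
  (\dim U <= \dim V)%N.
Proof.
move=> fUV finj; have capU : (U :&: lker (linfun f) = 0)%VS.
  apply/eqP; rewrite -subv0; apply/subvP => v.
  by rewrite memv_cap memv_ker lfunE memv0 => /andP[vU /eqP/(finj v vU)->].
rewrite -(limg_dim_eq capU); apply: dimvS; apply/subvP => _ /memv_imgP[u uU ->].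
by rewrite lfunE fUV.
Qed.

Section Epimorphism.
Variables (X X' Y : triple k).
Variable r : 'M[k]_(tr_d1 X, tr_d1 X') * 'M[k]_(tr_d2 X, tr_d2 X').
Hypotheses (rHom : r \in Hom_space X X') (r2full : row_full r.2).
Hypotheses (LY : is_Lmod Y) (freeY : row_free (tr_h Y)).

Lemma homdim_epi_leq : (homdim X' Y <= homdim X Y)%N.
Proof.
apply: (dimv_leq_inj (f := mulmx_pair r.1 r.2)) => [p pHom|p pHom].
  exact: Hom_space_comp.
move=> /(congr1 snd) /= r2p2; apply: Hom_space_eq0 freeY pHom _.
by apply: (row_full_inj r2full); rewrite r2p2 mulmx0.
Qed.

(* A morphism [p : X -> Y] killing [kermx r.2] factors through [r], the factor
   being [p] precomposed with the sections [pinvmx r.1] and [pinvmx r.2]. *)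
Lemma homdim_epi_geq : is_Lmod X' -> row_full r.1 ->
  (forall p, p \in Hom_space X Y -> kermx r.2 *m p.2 = 0) ->
  (homdim X Y <= homdim X' Y)%N.
Proof.
move=> LX' r1full kerp; have /Hom_spaceP[_ rA2 rh] := rHom.
set s1 := pinvmx r.1; set s2 := pinvmx r.2.
have s1r1 : s1 *m r.1 = 1%:M by exact: mulVpmx.
have s2r2 : s2 *m r.2 = 1%:M by exact: mulVpmx.
have A2X' : tr_A2 X' = s2 *m tr_A2 X *m r.2 by rewrite -mulmxA rA2 mulmxA s2r2 mul1mx.
have hX' : tr_h X' = s1 *m tr_h X *m r.2 by rewrite -mulmxA rh mulmxA s1r1 mul1mx.
have factor p : p \in Hom_space X Y -> p.2 = r.2 *m (s2 *m p.2).
  move=> /kerp/sub_kermxP ker_p2; apply/eqP; rewrite mulmxA -subr_eq0.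
  rewrite -{1}[p.2]mul1mx -mulmxBl; apply/eqP/sub_kermxP/(submx_trans _ ker_p2).
  by apply/sub_kermxP; rewrite mulmxBl mul1mx -mulmxA s2r2 mulmx1 subrr.
apply: (dimv_leq_inj (f := mulmx_pair s1 s2)) => [p pHom|p pHom].
  have /Hom_spaceP[_ pA2 ph] := pHom.
  apply: mem_Hom_space_free => //=.
    by rewrite A2X' -(mulmxA _ r.2) -factor // -mulmxA pA2 mulmxA.
  by rewrite hX' -(mulmxA _ r.2) -factor // -mulmxA ph mulmxA.
move=> /(congr1 snd) /= s2p2; have p2_0 : p.2 = 0 by rewrite factor // s2p2 mulmx0.
exact: Hom_space_eq0 freeY pHom p2_0.
Qed.

Lemma homdim_epi : is_Lmod X' -> row_full r.1 ->
  (forall p, p \in Hom_space X Y -> kermx r.2 *m p.2 = 0) ->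
  homdim X Y = homdim X' Y.
Proof.
by move=> LX' r1full kerp; apply/eqP; rewrite eqn_leq homdim_epi_geq // homdim_epi_leq.
Qed.

End Epimorphism.
End HomSpace.

Lemma expr_eq0_leq (R : pzSemiRingType) (x : R) m e :
  x ^+ m = 0 -> (m <= e)%N -> x ^+ e = 0.
Proof. by move=> xm0 le_me; rewrite -(subnKC le_me) exprD xm0 mul0r. Qed.

Section Nilpotent.
Variable k : fieldType.

Lemma mulmx_exprS n (A : 'M[k]_n) e : A *m A ^+ e = A ^+ e.+1.
Proof. by rewrite exprS. Qed.

Lemma mulmx_exprSr n (A : 'M[k]_n) e : A ^+ e *m A = A ^+ e.+1.
Proof. by rewrite exprSr. Qed.

Lemma mulmx_exprD n (A : 'M[k]_n) i j : A ^+ i *m A ^+ j = A ^+ (i + j).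
Proof. by rewrite exprD. Qed.

Lemma mulmx_exp_intertw m n (P : 'M[k]_(m, n)) (A : 'M_n) (B : 'M_m) :
  P *m A = B *m P -> forall e, P *m A ^+ e = B ^+ e *m P.
Proof.
move=> PA; elim=> [|e IH]; first by rewrite !expr0 mulmx1 mul1mx.
by rewrite -!mulmx_exprSr mulmxA IH -mulmxA PA mulmxA.
Qed.

Lemma Jblock_exp a e :
  Jblock k a ^+ e = \matrix_(i, j) (j == i + e :> nat)%N%:R.
Proof.
elim: e => [|e IH]; apply/matrixP => i j.
  by rewrite expr0 !mxE addn0 eq_sym.
rewrite -mulmx_exprSr IH !mxE; have [lt_ie|ge_ie] := ltnP (i + e) a.
  rewrite (bigD1 (Ordinal lt_ie)) //= !mxE eqxx mul1r addnS big1 ?addr0 // => l.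
  by rewrite -val_eqE !mxE /= => /negbTE->; rewrite mul0r.
rewrite big1 => [|l _]; last first.
  by rewrite !mxE; case: eqP => [eq_l|]; rewrite ?mul0r //; move: (ltn_ord l); lia.
by case: eqP => // eq_j; move: (ltn_ord j); lia.
Qed.

Lemma Jblock_nil a e : (a <= e)%N -> Jblock k a ^+ e = 0.
Proof.
move=> le_ae; apply/matrixP => i j; rewrite Jblock_exp !mxE.
by case: eqP => // eq_j; move: (ltn_ord j); lia.
Qed.

Lemma exp_block_diag m n (A : 'M[k]_m) (B : 'M[k]_n) e :
  block_mx A 0 0 B ^+ e = block_mx (A ^+ e) 0 0 (B ^+ e) :> 'M_(m + n).
Proof.
elim: e => [|e IH]; first by rewrite !expr0 -scalar_mx_block.
by rewrite -!mulmx_exprSr IH mulmx_block !mulmx0 !mul0mx !addr0 !add0r.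
Qed.

Lemma Nmat_nil s e : all (fun a => a <= e)%N s -> Nmat k s ^+ e = 0.
Proof.
elim: s => [|a s IH] /=; first by rewrite flatmx0.
by case/andP=> /Jblock_nil J0 /IH N0; rewrite exp_block_diag J0 N0 block_mx0.
Qed.

End Nilpotent.

Lemma partition_head_max s : is_partition s -> all (fun a => a <= head 0 s)%N s.
Proof.
case: s => [|a s] //= /andP[srt _]; rewrite leqnn /=.
by apply: order_path_min srt => x y z /= le_yx le_zy; exact: leq_trans le_zy le_yx.
Qed.

Lemma is_partition_cons a s :
  is_partition s -> (head 0 s <= a)%N -> (0 < a)%N -> is_partition (a :: s).
Proof.
rewrite /is_partition /= => /andP[s_sorted s_pos] le_head a_pos.
rewrite a_pos s_pos !andbT.
by case: s le_head s_sorted {s_pos} => //= b s ->.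
Qed.

Section Jordan.
Variable k : fieldType.

Lemma mx_nonzero_entry m n (B : 'M[k]_(m, n)) : B != 0 -> exists i j, B i j != 0.
Proof.
move=> nzB; have [[i j] /= nzBij|B0] := pickP (fun ij => B ij.1 ij.2 != 0).
  by exists i, j.
by case/eqP: nzB; apply/matrixP => i j; rewrite mxE; apply/eqP/negbFE/(B0 (i, j)).
Qed.

Lemma mx_nonzero_corner m n (B : 'M[k]_(m, n)) : B != 0 ->
  exists (u : 'rV_m) (w : 'cV_n), u *m B *m w = 1%:M.
Proof.
move=> /mx_nonzero_entry[i [j nzBij]].
exists (delta_mx 0 i), ((B i j)^-1 *: delta_mx j 0).
rewrite -rowE -scalemxAr -colE; apply/matrixP => a b.
by rewrite !ord1 !mxE mulVf.
Qed.

Lemma stable_row_base m n (C : 'M[k]_(m, n)) (A : 'M_n) : (C *m A <= C)%MS ->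
  exists A' : 'M_(\rank C), row_base C *m A = A' *m row_base C.
Proof.
move=> CA; exists (row_base C *m A *m pinvmx (row_base C)); rewrite mulmxKpV //.
by rewrite (eqmxMr _ (eq_row_base C)) eq_row_base.
Qed.

Lemma intertw_nil m n (B : 'M[k]_(m, n)) A A' e :
  row_free B -> B *m A = A' *m B -> B *m A ^+ e = 0 -> A' ^+ e = 0.
Proof.
move=> freeB BA BAe0; apply/eqP.
by rewrite -(mulmx_free_eq0 _ freeB) -(mulmx_exp_intertw BA) BAe0.
Qed.

Section CyclicSummand.
Variables (n m1 : nat) (A : 'M[k]_n) (u : 'rV[k]_n) (w : 'cV[k]_n).
Hypotheses (A_nil : A ^+ m1.+1 = 0) (uAw : u *m A ^+ m1 *m w = 1%:M).

Definition cyclic_mx : 'M_(m1.+1, n) := \matrix_i (u *m A ^+ i).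
Definition cyclic_dual_mx : 'M_(n, m1.+1) := \matrix_(l, j) (A ^+ j *m w) l 0.

Lemma mul_cyclic_dual_eq0 p (x : 'M[k]_(p, n)) :
  x *m cyclic_dual_mx = 0 <-> forall j : 'I_m1.+1, x *m (A ^+ j *m w) = 0.
Proof.
have entry a j : (x *m cyclic_dual_mx) a j = (x *m (A ^+ j *m w)) a 0.
  by rewrite !mxE; apply: eq_bigr => l _; rewrite mxE.
split=> [x0 j|xj0]; apply/matrixP => a b.
  by rewrite ord1 -entry x0 !mxE.
by rewrite entry xj0 !mxE.
Qed.

Lemma cyclic_mxA : cyclic_mx *m A = Jblock k m1.+1 *m cyclic_mx.
Proof.
apply/row_matrixP => i; rewrite !row_mul rowK (mulmx_sum_row (row i _)).
rewrite -mulmxA mulmx_exprSr; have [lt_i1|ge_i1] := ltnP i.+1 m1.+1.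
  rewrite (bigD1 (Ordinal lt_i1)) //= big1 ?addr0 => [|l].
    by rewrite !mxE eqxx scale1r rowK.
  by rewrite -val_eqE !mxE /= => /negbTE->; rewrite scale0r.
rewrite (expr_eq0_leq A_nil ge_i1) mulmx0 big1 // => l _.
by rewrite !mxE; case: eqP => [eq_l|]; rewrite ?scale0r //; move: (ltn_ord l); lia.
Qed.

(* Every nonzero combination of the rows [u A^i] reaches a nonzero multiple of
   [u A^m1] after enough multiplications by [A]: shift its lowest term to the top. *)
Lemma cyclic_mx_top (y : 'rV[k]_m1.+1) : y != 0 ->
  exists2 t, (t <= m1)%N & exists2 c, c != 0 &
    y *m cyclic_mx *m A ^+ t = c *: (u *m A ^+ m1).
Proof.
move=> nz_y; have ex_i : exists i, (i < m1.+1)%N && (y 0 (inord i) != 0).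
  have [i [j nz_yj]] := mx_nonzero_entry nz_y.
  by exists j; rewrite ltn_ord inord_val -(ord1 i).
case: (ex_minnP ex_i) => i0 /andP[lt_i0 nz_yi0] min_i0.
exists (m1 - i0)%N; first exact: leq_subr.
exists (y 0 (inord i0)) => //.
rewrite (mulmx_sum_row y) mulmx_suml (bigD1 (inord i0)) //= big1 ?addr0 => [|i ne_i].
  by rewrite rowK -!scalemxAl -mulmxA mulmx_exprD inordK // subnKC.
rewrite rowK -!scalemxAl; have [lt_ii0|ge_ii0] := ltnP i i0.
  have : y 0 (inord i) == 0.
    by apply: contraTT lt_ii0 => nz; rewrite -leqNgt min_i0 // ltn_ord.
  by rewrite inord_val => /eqP->; rewrite scale0r.
have gt_ii0 : (i0 < i)%N.
  rewrite ltn_neqAle ge_ii0 andbT; apply: contra ne_i => /eqP eq_i.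
  by apply/eqP/val_inj; rewrite /= inordK // eq_i.
rewrite -mulmxA mulmx_exprD (expr_eq0_leq A_nil) ?mulmx0 ?scaler0 //; lia.
Qed.

Lemma top_scale_eq0 c : c *: (u *m A ^+ m1) *m w = 0 -> c = 0.
Proof.
by rewrite -scalemxAl uAw scalemx1 => /matrixP/(_ 0 0); rewrite !mxE eqxx mulr1n.
Qed.

Lemma cyclic_mx_free : row_free cyclic_mx.
Proof.
rewrite -kermx_eq0; apply/eqP/row_matrixP => i; rewrite row0; apply/eqP.
apply/negPn/negP => /cyclic_mx_top[t _ [c nz_c yKt]]; case/negP: nz_c.
rewrite -row_mul mulmx_ker row0 !mul0mx in yKt.
by apply/eqP/top_scale_eq0; rewrite -yKt mul0mx.
Qed.

Lemma cyclic_cap_ker_dual : (cyclic_mx :&: kermx cyclic_dual_mx)%MS = 0.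
Proof.
apply/row_matrixP => i; rewrite row0; set x := row i _.
have xK : (x <= cyclic_mx)%MS by apply: submx_trans (row_sub _ _) (capmxSl _ _).
have xD : x *m cyclic_dual_mx = 0.
  by apply/sub_kermxP; apply: submx_trans (row_sub _ _) (capmxSr _ _).
have yKx : x *m pinvmx cyclic_mx *m cyclic_mx = x by rewrite mulmxKpV.
have [y0|/cyclic_mx_top[t le_tm1 [c nz_c yKt]]] := eqVneq (x *m pinvmx cyclic_mx) 0.
  by rewrite -yKx y0 mul0mx.
case/negP: nz_c; apply/eqP/top_scale_eq0; rewrite -yKt yKx -mulmxA.
exact: (proj1 (mul_cyclic_dual_eq0 x) xD (Ordinal (le_tm1 : (t < m1.+1)%N))).
Qed.

Lemma ker_cyclic_dual_stable : (kermx cyclic_dual_mx *m A <= kermx cyclic_dual_mx)%MS.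
Proof.
rewrite sub_kermx; apply/eqP/mul_cyclic_dual_eq0 => j.
rewrite -mulmxA (mulmxA A) mulmx_exprS; have [lt_j1|ge_j1] := ltnP j.+1 m1.+1.
  exact: (proj1 (mul_cyclic_dual_eq0 _) (mulmx_ker _) (Ordinal lt_j1)).
by rewrite (expr_eq0_leq A_nil ge_j1) mul0mx mulmx0.
Qed.

End CyclicSummand.

Lemma nilpotent_cyclic_summand n (A : 'M[k]_n) m1 : A ^+ m1.+1 = 0 -> A ^+ m1 != 0 ->
  exists2 K : 'M_(m1.+1, n), row_free K /\ K *m A = Jblock k m1.+1 *m K &
  exists C : 'M_n, [/\ (C *m A <= C)%MS, (K :&: C)%MS = 0 & (\rank C + m1.+1 = n)%N].
Proof.
move=> A_nil /mx_nonzero_corner[u [w uAw]].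
have freeK := cyclic_mx_free A_nil uAw.
exists (cyclic_mx m1 A u); first by split; [|exact: cyclic_mxA].
exists (kermx (cyclic_dual_mx m1 A w)); split.
- exact: ker_cyclic_dual_stable.
- exact: cyclic_cap_ker_dual.
have rkK : \rank (cyclic_mx m1 A u) = m1.+1 by apply/eqP.
have := mxrank_disjoint_sum (cyclic_cap_ker_dual A_nil uAw).
rewrite rkK addnC => rk_sum; apply/eqP; rewrite eqn_leq -rk_sum rank_leq_col /=.
by rewrite rk_sum mxrank_ker; have := rank_leq_col (cyclic_dual_mx m1 A w); lia.
Qed.

Lemma nilpotent_Jordan n (A : 'M[k]_n) m : A ^+ m = 0 ->
  exists s, [/\ is_partition s, (head 0 s <= m)%N &
    exists P : 'M[k]_(sumn s, n), [/\ row_free P, row_full P & P *m A = Nmat k s *m P]].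
Proof.
elim/ltn_ind: n A m => -[|n] IH A m A_nil.
  by exists [::]; split=> //; exists 0; rewrite /row_free /row_full !mxrank0 !flatmx0.
case: (ex_minnP (ex_intro (fun i => A ^+ i == 0) m (introT eqP A_nil))).
case=> [|m1] /eqP A_nil1 min_m1; first by move/eqP: A_nil1; rewrite expr0 oner_eq0.
have le_m1m : (m1 < m)%N by apply: min_m1; apply/eqP.
have nzA : A ^+ m1 != 0 by apply/negP => /min_m1; rewrite ltnn.
have [K [freeK KA] [C [CA KC0 rkC]]] := nilpotent_cyclic_summand A_nil1 nzA.
have [A' BA] := stable_row_base CA.
have A'_nil : A' ^+ m1.+1 = 0.
  by apply: intertw_nil (row_base_free C) BA _; rewrite A_nil1 mulmx0.
have [|s [s_part head_s [P [freeP fullP PA']]]] := IH _ _ A' _ A'_nil; first lia.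
have rkP : sumn s = \rank C by rewrite -(eqP freeP) (eqP fullP).
have PB_C : (P *m row_base C <= C)%MS.
  by rewrite (submx_trans (submxMl _ _)) // eq_row_base.
have rk_KPB : \rank (col_mx K (P *m row_base C)) = (m1.+1 + sumn s)%N.
  rewrite -addsmxE mxrank_disjoint_sum; last first.
    by apply/eqP; rewrite -submx0 -KC0 capmxS.
  by rewrite (mxrankMfree _ (row_base_free C)) (eqP freeK) (eqP freeP).
exists (m1.+1 :: s); split=> //; first exact: is_partition_cons.
exists (col_mx K (P *m row_base C)); split.
- by rewrite /row_free rk_KPB.
- by rewrite /row_full rk_KPB rkP addnC rkC.
rewrite mul_col_mx KA -mulmxA BA mulmxA PA' /= mul_block_col.
by rewrite !mul0mx addr0 add0r mulmxA.
Qed.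
End Jordan.

Section Reduction.
Variable k : fieldType.
Implicit Types X Y : triple k.

Lemma quotient_by_stable m n (A : 'M[k]_n) (K : 'M_(m, n)) : (K *m A <= K)%MS ->
  exists q (pi : 'M_(n, q)) (E : 'M_q), [/\ row_full pi,
    forall p (x : 'M_(p, n)), (x <= K)%MS = (x *m pi == 0) & A *m pi = pi *m E].
Proof.
move=> KA; pose pi := col_base (cokermx K).
have piK p (x : 'M_(p, n)) : (x <= K)%MS = (x *m pi == 0).
  rewrite submxE -(mulmx_free_eq0 _ (row_base_free (cokermx K))).
  by rewrite -mulmxA mulmx_base.
exists _, pi, (pinvmx pi *m A *m pi); split=> //; first exact: col_base_full.
have : ((1%:M - pi *m pinvmx pi) *m A <= K)%MS.
  apply: submx_trans (submxMr _ _) KA.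
  by rewrite piK mulmxBl mul1mx -mulmxA mulVpmx ?col_base_full // mulmx1 subrr.
by rewrite piK !mulmxBl mul1mx subr_eq0 !mulmxA => /eqP.
Qed.

Definition trunc_mx X N := (tr_h X *m tr_A2 X ^+ 2 + tr_A2 X ^+ N)%MS.

Lemma trunc_mx_stable X N : is_Lmod X -> (trunc_mx X N *m tr_A2 X <= trunc_mx X N)%MS.
Proof.
move=> LX; rewrite addsmxMr addsmx_sub; apply/andP; split.
  apply: submx_trans (addsmxSl _ _).
  by rewrite -mulmxA mulmx_exprSr -mulmx_exprS mulmxA -LX -mulmxA submxMl.
by apply: submx_trans (addsmxSr _ _); rewrite mulmx_exprSr -mulmx_exprS submxMl.
Qed.

Lemma Hom_space_trunc X Y N p : is_Lmod Y -> tr_A1 Y ^+ 2 = 0 -> tr_A2 Y ^+ N = 0 ->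
  p \in Hom_space X Y -> trunc_mx X N *m p.2 = 0.
Proof.
move=> LY A1Y_nil A2Y_nil /Hom_spaceP[_ pA2 ph].
have pA2e := mulmx_exp_intertw (esym pA2).
apply/sub_kermxP; rewrite addsmx_sub !sub_kermx -mulmxA -!pA2e A2Y_nil mulmx0 eqxx andbT.
by rewrite mulmxA ph -mulmxA (mulmx_exp_intertw (esym LY)) A1Y_nil mul0mx mulmx0.
Qed.

(* [X] maps onto the triple formed by [X2 / K] and the image of [X1] in it,
   where [K = h(X1) T^2 + X2 T^N] is [trunc_mx X N]. *)
Lemma truncation X N : is_Lmod X -> exists X' r,
  [/\ is_Lmod X', row_free (tr_h X'), tr_A1 X' ^+ 2 = 0, tr_A2 X' ^+ N = 0 &
   [/\ r \in Hom_space X X', row_full r.1, row_full r.2 &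
       (kermx r.2 <= trunc_mx X N)%MS]].
Proof.
move=> LX; have [q [pi [E [pi_full piK A2pi]]]] :=
  quotient_by_stable (trunc_mx_stable N LX).
have piE := mulmx_exp_intertw (esym A2pi).
set hpi := tr_h X *m pi.
have trunc_pi p (x : 'M_(p, tr_d2 X)) : (x <= trunc_mx X N)%MS -> x *m pi = 0.
  by rewrite piK => /eqP.
have hpiE : (hpi *m E <= hpi)%MS.
  by rewrite -mulmxA -A2pi mulmxA -LX -mulmxA submxMl.
have [B1 f0B1] := stable_row_base hpiE; set f0 := row_base hpi in f0B1.
have f0_free : row_free f0 := row_base_free hpi.
have f0_hpi : (f0 <= hpi)%MS by rewrite eq_row_base.
have hpi_f0 : (hpi <= f0)%MS by rewrite eq_row_base.
pose r1 := hpi *m pinvmx f0.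
have r1f0 : r1 *m f0 = hpi by rewrite mulmxKpV.
have LX' : is_Lmod (Triple B1 E f0) by rewrite /is_Lmod /= f0B1.
exists (Triple B1 E f0), (r1, pi); split=> //=.
- apply: intertw_nil f0_free f0B1 _.
  have hpiE2 : hpi *m E ^+ 2 = 0.
    by rewrite -mulmxA piE mulmxA trunc_pi ?mul0mx // addsmxSl.
  by rewrite -(mulmxKpV f0_hpi) -mulmxA hpiE2 mulmx0.
- by apply: (row_full_inj pi_full); rewrite mulmx0 piE trunc_pi // addsmxSr.
split=> //=.
- by apply: (@mem_Hom_space_free _ X (Triple B1 E f0) (r1, pi)) => //=; rewrite r1f0.
- by rewrite /row_full eqn_leq rank_leq_col -{1}r1f0 mxrankM_maxl.
by rewrite piK mulmx_ker.
Qed.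

Lemma pinvmx_intertw m n (P : 'M[k]_(m, n)) A B :
  row_free P -> row_full P -> P *m A = B *m P -> A *m pinvmx P = pinvmx P *m B.
Proof.
move=> freeP fullP PA; rewrite -[RHS]mulmx1 -(mulmxVp freeP) mulmxA.
by rewrite -(mulmxA _ B) -PA mulmxA mulVpmx // mul1mx.
Qed.

Lemma Lmod_transport X m1 m2 (P1 : 'M_(m1, tr_d1 X)) (P2 : 'M_(m2, tr_d2 X)) B1 B2 :
  is_Lmod X -> row_free (tr_h X) ->
  row_free P1 -> row_full P1 -> row_free P2 -> row_full P2 ->
  P1 *m tr_A1 X = B1 *m P1 -> P2 *m tr_A2 X = B2 *m P2 ->
  [/\ is_Lmod (Triple B1 B2 (P1 *m tr_h X *m pinvmx P2)),
      row_free (P1 *m tr_h X *m pinvmx P2) &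
      (pinvmx P1, pinvmx P2) \in Hom_space X (Triple B1 B2 (P1 *m tr_h X *m pinvmx P2))].
Proof.
move=> LX freeh freeP1 fullP1 freeP2 fullP2 P1A1 P2A2.
have A2R2 := pinvmx_intertw freeP2 fullP2 P2A2.
split.
- rewrite /is_Lmod /= (mulmxA B1 (P1 *m _)) (mulmxA B1 P1) -P1A1 -(mulmxA P1 _ (tr_h X)).
  by rewrite LX (mulmxA P1) -(mulmxA (P1 *m _) (tr_A2 X)) A2R2 mulmxA.
- rewrite /row_free (mxrankMfree _ (pinvmx_free fullP2)) (mxrankMfree _ freeh).
  exact: freeP1.
apply/Hom_spaceP; split=> /=; [exact: pinvmx_intertw | exact: A2R2 |].
by rewrite !mulmxA mulVpmx // mul1mx.
Qed.

Lemma homdim_S2_reduction X N : is_Lmod X -> exists2 X', in_S2 X' &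
  forall Y, is_Lmod Y -> row_free (tr_h Y) -> tr_A1 Y ^+ 2 = 0 -> tr_A2 Y ^+ N = 0 ->
    homdim X Y = homdim X' Y.
Proof.
move=> /(truncation N)[Xq [r [LXq freeq A1q_nil A2q_nil [rHom r1full r2full r_ker]]]].
have [a [a_part a_head [P1 [freeP1 fullP1 P1A1]]]] := nilpotent_Jordan A1q_nil.
have [b [b_part _ [P2 [freeP2 fullP2 P2A2]]]] := nilpotent_Jordan A2q_nil.
have [LX' freeX' r'Hom] := Lmod_transport LXq freeq freeP1 fullP1 freeP2 fullP2 P1A1 P2A2.
exists (Triple (Nmat k a) (Nmat k b) (P1 *m tr_h Xq *m pinvmx P2)).
  by exists a, b, (P1 *m tr_h Xq *m pinvmx P2); rewrite a_part b_part.
move=> Y LY freeY A1Y_nil A2Y_nil.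
rewrite (homdim_epi rHom r2full LY freeY LXq r1full); last first.
  move=> p /(Hom_space_trunc LY A1Y_nil A2Y_nil) trunc_p.
  by apply/sub_kermxP; apply: submx_trans r_ker _; apply/sub_kermxP.
apply: (homdim_epi r'Hom) => //=; [exact: pinvmx_full | exact: pinvmx_full |].
by move=> p _; move: (pinvmx_free fullP2); rewrite -kermx_eq0 => /eqP->; rewrite mul0mx.
Qed.

End Reduction.

Lemma S2_nilpotent (k : fieldType) (Y : triple k) : in_S2 Y -> exists N,
  [/\ is_Lmod Y, row_free (tr_h Y), tr_A1 Y ^+ 2 = 0 &
      forall N', (N <= N')%N -> tr_A2 Y ^+ N' = 0].
Proof.
case=> a [b [f [/andP[a_part b_part] a_head -> LY freef]]].
exists (head 0 b); split=> //= [|N' le_N'].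
  by apply: Nmat_nil; apply: sub_all (partition_head_max a_part) => x /leq_trans; apply.
by apply: Nmat_nil; apply: sub_all (partition_head_max b_part) => x /leq_trans; apply.
Qed.

Lemma in_S2_S (k : fieldType) (X : triple k) : in_S2 X -> in_S X.
Proof. by case=> a [b [f [/andP[a_part b_part] _ -> LX freef]]]; exists a, b, f. Qed.

Lemma in_S_Lmod (k : fieldType) (X : triple k) : in_S X -> is_Lmod X.
Proof. by case=> a [b [f [_ _ _ LX _]]]. Qed.

Unset Implicit Arguments.
Local Close Scope ring_scope.

Theorem lemma3p3 (k : fieldType) (Y Z : triple k) (a b c : seq nat) :
  in_S2 Y -> in_S2 Z -> has_ptype Y a b c -> has_ptype Z a b c ->
  (hom_le Y Z <-> (forall X, in_S2 X -> (homdim X Y <= homdim X Z)%N)) /\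
  (hom_le Y Z <-> (forall X, is_Lmod X -> (homdim X Y <= homdim X Z)%N)).
Proof.
move=> /S2_nilpotent[NY [LY freeY A1Y_nil A2Y_nil]].
move=> /S2_nilpotent[NZ [LZ freeZ A1Z_nil A2Z_nil]] _ _.
have reduce X : is_Lmod X -> exists2 X', in_S2 X' &
    homdim X Y = homdim X' Y /\ homdim X Z = homdim X' Z.
  move=> /(homdim_S2_reduction (NY + NZ))[X' S2X' eq_homdim].
  exists X' => //; split; apply: eq_homdim => //.
    exact: A2Y_nil (leq_addr _ _).
  exact: A2Z_nil (leq_addl _ _).
split; split=> [le_YZ X|le_YZ X].
- by move/in_S2_S; exact: le_YZ.
- by move/in_S_Lmod/reduce=> [X' S2X' [-> ->]]; exact: le_YZ.
- by move/reduce=> [X' S2X' [-> ->]]; exact/le_YZ/in_S2_S.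
- by move/in_S_Lmod; exact: le_YZ.
Qed.
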